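(* Assume (FS), let $E$ be a small subset of $\mathfrak C$ and $p\in S(E)$. The following are equivalent: (1) $p$ is $\operatorname{acl}$-stationary, i.e. $p$ has a unique extension to a complete type over $\operatorname{acl}(E)$; (2) $E\subseteq\operatorname{dcl}(Ea)$ is primary for some $a\models p$; (3) $E\subseteq\operatorname{dcl}(Ea)$ is primary for every $a\models p$.
   Context: $L$ is a first-order language, $T$ a complete $L$-theory, $\mathfrak C$ a monster model of $T$; $\operatorname{acl}$, $\operatorname{dcl}$ are computed in $\mathfrak C$. (FS): $T$ codes finite sets, i.e. every finite set of real tuples has a code which is a real tuple. For small $F\subseteq K$, the extension $F\subseteq K$ is primary if $\operatorname{dcl}(K)\cap\operatorname{acl}(F)=\operatorname{dcl}(F)$. *)

From mathcomp Require Import ssreflect ssrfun ssrbool eqtype ssrnat fintype.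
From Stdlib Require Import List.

Set Implicit Arguments.
Unset Strict Implicit.
Unset Printing Implicit Defensive.

Record language : Type := Language {
  Fsym : Type;                 (* function symbols (constants = arity 0) *)
  Rsym : Type;
  farity : Fsym -> nat;
  rarity : Rsym -> nat }.

(* Terms with variables indexed by nat and parameters (constants naming
   elements) taken from a type P. *)
Inductive term (L : language) (P : Type) : Type :=
| tvar : nat -> term L P
| tpar : P -> term L P
| tfun : forall f : Fsym L, ('I_(farity f) -> term L P) -> term L P.

Inductive formula (L : language) (P : Type) : Type :=
| fEq  : term L P -> term L P -> formula L P
| fRel : forall r : Rsym L, ('I_(rarity r) -> term L P) -> formula L P
| fNot : formula L P -> formula L P
| fAnd : formula L P -> formula L P -> formula L P
| fEx  : nat -> formula L P -> formula L P.   (* fEx k phi = exists x_k, phi *)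

Arguments tvar {L P}.
Arguments tpar {L P}.
Arguments fNot {L P}.
Arguments fAnd {L P}.
Arguments fEx {L P}.

Fixpoint tfree L P (n : nat) (t : term L P) : Prop :=
  match t with
  | tvar k => k = n
  | tpar _ => False
  | tfun f args => exists i, tfree n (args i)
  end.

Fixpoint ffree L P (n : nat) (phi : formula L P) : Prop :=
  match phi with
  | fEq t1 t2 => tfree n t1 \/ tfree n t2
  | fRel r args => exists i, tfree n (args i)
  | fNot psi => ffree n psi
  | fAnd psi chi => ffree n psi \/ ffree n chi
  | fEx k psi => k <> n /\ ffree n psi
  end.

Fixpoint tparams L P (A : P -> Prop) (t : term L P) : Prop :=
  match t with
  | tvar _ => True
  | tpar p => A p
  | tfun f args => forall i, tparams A (args i)
  end.

Fixpoint fparams L P (A : P -> Prop) (phi : formula L P) : Prop :=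
  match phi with
  | fEq t1 t2 => tparams A t1 /\ tparams A t2
  | fRel r args => forall i, tparams A (args i)
  | fNot psi => fparams A psi
  | fAnd psi chi => fparams A psi /\ fparams A chi
  | fEx _ psi => fparams A psi
  end.

Record structure (L : language) : Type := Structure {
  carrier :> Type;
  fun_int : forall f : Fsym L, ('I_(farity f) -> carrier) -> carrier;
  rel_int : forall r : Rsym L, ('I_(rarity r) -> carrier) -> Prop }.

Definition update (X : Type) (v : nat -> X) (n : nat) (x : X) : nat -> X :=
  fun k => if Nat.eqb k n then x else v k.

Fixpoint teval L (M : structure L) P (par : P -> M) (v : nat -> M)
  (t : term L P) : M :=
  match t with
  | tvar k => v k
  | tpar p => par p
  | tfun f args => @fun_int L M f (fun i => teval par v (args i))
  end.

Fixpoint sat L (M : structure L) P (par : P -> M) (v : nat -> M)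
  (phi : formula L P) : Prop :=
  match phi with
  | fEq t1 t2 => teval par v t1 = teval par v t2
  | fRel r args => @rel_int L M r (fun i => teval par v (args i))
  | fNot psi => ~ sat par v psi
  | fAnd psi chi => sat par v psi /\ sat par v chi
  | fEx k psi => exists x : M, sat par (update v k x) psi
  end.

Definition sentence L (phi : formula L Empty_set) : Prop :=
  forall n, ~ ffree n phi.

Definition no_par L (M : structure L) : Empty_set -> M :=
  fun e => match e with end.

Definition complete_theory L (T : formula L Empty_set -> Prop) : Prop :=
  (forall phi, T phi -> sentence phi) /\
  (forall phi, sentence phi -> T phi \/ T (fNot phi)).

Definition models L (M : structure L) (T : formula L Empty_set -> Prop) : Prop :=
  forall phi, T phi -> forall v : nat -> M, sat (no_par M) v phi.

Section InC.
Variable L : language.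
Variable C : structure L.

Definition fml := formula L C.

Definition LB_formula (n : nat) (B : C -> Prop) (phi : fml) : Prop :=
  fparams B phi /\ (forall k, ffree k phi -> (k < n)%coq_nat).

Definition sat_tuple (n : nat) (a : 'I_n -> C) (phi : fml) : Prop :=
  forall v : nat -> C, (forall i : 'I_n, v (nat_of_ord i) = a i) -> sat id v phi.

Definition complete_type (n : nat) (B : C -> Prop) (p : fml -> Prop) : Prop :=
  (forall phi, p phi -> LB_formula n B phi) /\
  (forall phi, LB_formula n B phi -> p phi \/ p (fNot phi)) /\
  (forall l : list fml, (forall phi, In phi l -> p phi) ->
     exists v : nat -> C, forall phi, In phi l -> sat id v phi).

Definition realizes (n : nat) (a : 'I_n -> C) (p : fml -> Prop) : Prop :=
  forall phi, p phi -> sat_tuple a phi.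

Definition sat1 (phi : fml) (c : C) : Prop :=
  forall v : nat -> C, v 0 = c -> sat id v phi.

Definition dcl (A : C -> Prop) : C -> Prop := fun b =>
  exists phi, LB_formula 1 A phi /\ (forall c, sat1 phi c <-> c = b).

Definition acl (A : C -> Prop) : C -> Prop := fun b =>
  exists phi, LB_formula 1 A phi /\ sat1 phi b /\
    exists l : list C, forall c, sat1 phi c -> In c l.

Definition primary (F K : C -> Prop) : Prop :=
  (forall x, F x -> K x) /\
  (forall x, (dcl K x /\ acl F x) <-> dcl F x).

Definition acl_stationary (n : nat) (E : C -> Prop) (p : fml -> Prop) : Prop :=
  exists q, complete_type n (acl E) q /\ (forall phi, p phi -> q phi) /\
    forall q', complete_type n (acl E) q' -> (forall phi, p phi -> q' phi) ->
      forall phi, q' phi <-> q phi.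

Definition add_tuple (E : C -> Prop) (n : nat) (a : 'I_n -> C) : C -> Prop :=
  fun x => E x \/ exists i : 'I_n, x = a i.

Definition automorphism (s : C -> C) : Prop :=
  (exists s' : C -> C, (forall x, s' (s x) = x) /\ (forall x, s (s' x) = x)) /\
  (forall f args, s (@fun_int L C f args) = @fun_int L C f (fun i => s (args i))) /\
  (forall r args, @rel_int L C r args <-> @rel_int L C r (fun i => s (args i))).

Definition elementary_on (A : C -> Prop) (f : C -> C) : Prop :=
  forall phi : fml, fparams A phi ->
    forall v : nat -> C, (forall k, A (v k)) ->
      (sat id v phi <-> sat f (fun k => f (v k)) phi).

(** (FS): every finite set of real tuples has a real tuple as a code *)
Definition mem_tuple (n : nat) (t : 'I_n -> C) (S : list ('I_n -> C)) : Prop :=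
  exists t', In t' S /\ forall i, t i = t' i.

Definition fixes_setwise (s : C -> C) (n : nat) (S : list ('I_n -> C)) : Prop :=
  (forall t, mem_tuple t S -> mem_tuple (fun i => s (t i)) S) /\
  (forall u, mem_tuple u S -> exists t, mem_tuple t S /\ forall i, s (t i) = u i).

Definition codes_finite_sets : Prop :=
  forall (n : nat) (S : list ('I_n -> C)),
    exists (m : nat) (c : 'I_m -> C),
      forall s, automorphism s ->
        (fixes_setwise s S <-> forall j, s (c j) = c j).

End InC.

Definition lt_card (X Y : Type) : Prop :=
  (exists f : X -> Y, forall x y, f x = f y -> x = y) /\
  ~ (exists g : Y -> X, forall x y, g x = g y -> x = y).

Definition small (kappa : Type) (X : Type) (A : X -> Prop) : Prop :=
  lt_card {x : X | A x} kappa.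

(* C is a monster model: kappa-saturated and strongly kappa-homogeneous for
   an (uncountable) kappa > |L| + aleph_0; "small" means of size < kappa. *)
Record monster L (C : structure L) (kappa : Type) : Prop := Monster {
  monster_inhabited : inhabited C;
  monster_kappa_uncountable : lt_card nat kappa;
  monster_kappa_language : lt_card (Fsym L + Rsym L) kappa;
  monster_saturated : forall (B : C -> Prop) (n : nat) (p : fml C -> Prop),
      small kappa B -> complete_type n B p ->
      exists a : 'I_n -> C, realizes a p;
  monster_homogeneous : forall (A : C -> Prop) (f : C -> C),
      small kappa A -> elementary_on A f ->
      exists s, automorphism s /\ forall x, A x -> s x = f x }.

From mathcomp Require Import ssreflect ssrfun ssrbool eqtype ssrnat seq fintype finfun.
From mathcomp Require boolp classical_sets.
From Stdlib Require Import List Classical ClassicalEpsilon FunctionalExtensionality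
  PropExtensionality ProofIrrelevance.

Set Implicit Arguments.
Unset Strict Implicit.
Unset Printing Implicit Defensive.

(** (1) => (3): if [x ∈ dcl(Ea) ∩ acl(E)] and [σ ∈ Aut(C/E)], uniqueness of the
  extension of [p] to [acl(E)] yields [τ] fixing [E x] with [τσa = a]; then
  [τσ] fixes [dcl(Ea)], so [σx = x], and [x ∈ dcl(E)] by the Galois
  characterisation of [dcl].  (3) => (2) since [p] is realized.
  (2) => (1): let [q'] extend [p] over [acl(E)] and [φ(x, c) ∈ q'].  Pick
  [a' ⊨ p] with [φ(a', c)] and [σ ∈ Aut(C/E)] with [σa' = a].  The set [S] of
  [E]-conjugates [t] of [c] with [φ(a, t)] is finite and [Aut(C/Ea)]-invariant;
  its code lies in [dcl(Ea) ∩ acl(E) = dcl(E)], so [σ] fixes [S] setwise.  As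
  [σc ∈ S], also [c ∈ S], i.e. [φ(a, c)].  So [q'] is the type of [a] over
  [acl(E)], which is therefore the unique extension of [p]. *)

(** ** Syntax *)

Section Syntax.
Variable L : language.

Lemma term_nested_ind (P : Type) (Q : term L P -> Prop) :
  (forall k, Q (tvar k)) -> (forall c, Q (tpar c)) ->
  (forall f args, (forall i, Q (args i)) -> Q (@tfun _ _ f args)) -> forall t, Q t.
Proof.
move=> Hvar Hpar Hfun; fix IH 1 => t; case: t => [k|c|f args].
- exact: Hvar.
- exact: Hpar.
- by apply: Hfun => i; apply: IH.
Qed.

Lemma update_same X (v : nat -> X) k x : update v k x k = x.
Proof. by rewrite /update PeanoNat.Nat.eqb_refl. Qed.

Lemma update_other X (v : nat -> X) k x j : j <> k -> update v k x j = v j.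
Proof. by move=> /PeanoNat.Nat.eqb_neq jk; rewrite /update jk. Qed.

Lemma tparams_mono P (A B : P -> Prop) (t : term L P) :
  (forall c, A c -> B c) -> tparams A t -> tparams B t.
Proof.
by move=> AB; elim/term_nested_ind: t => [k|c|f args IH] //= => [/AB|H i]; last apply: IH.
Qed.

Lemma fparams_mono P (A B : P -> Prop) (phi : formula L P) :
  (forall c, A c -> B c) -> fparams A phi -> fparams B phi.
Proof.
move=> AB; elim: phi => [t1 t2|r args|psi IH|psi IH chi IH'|k psi IH] /=.
- by case=> ? ?; split; apply: (tparams_mono AB).
- by move=> H i; apply: (tparams_mono AB).
- exact: IH.
- by case=> ? ?; split; [apply: IH|apply: IH'].
- exact: IH.
Qed.

Lemma fparams_true P (phi : formula L P) : fparams (fun _ => True) phi.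
Proof.
have tparams_true (t : term L P) : tparams (fun _ => True) t.
  by elim/term_nested_ind: t.
by elim: phi => //= *; try split; try apply: tparams_true.
Qed.

Lemma teval_coinc (M : structure L) P (par par' : P -> M) u u' t :
  tparams (fun c => par c = par' c) t -> (forall k, tfree k t -> u k = u' k) ->
  teval par u t = teval par' u' t.
Proof.
elim/term_nested_ind: t => [k|c|f args IH] /= Hp Hf.
- exact: Hf.
- exact: Hp.
- congr (fun_int _); apply: functional_extensionality => i.
  by apply: IH => [|k Hk]; [exact: Hp|apply: Hf; exists i].
Qed.

Lemma sat_coinc (M : structure L) P (par par' : P -> M) phi : forall u u',
  fparams (fun c => par c = par' c) phi -> (forall k, ffree k phi -> u k = u' k) ->
  (sat par u phi <-> sat par' u' phi).
Proof.
elim: phi => [t1 t2|r args|psi IH|psi IH chi IH'|k psi IH] u u' /= Hp Hf.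
- by rewrite (teval_coinc (proj1 Hp) (fun j Hj => Hf j (or_introl Hj)))
             (teval_coinc (proj2 Hp) (fun j Hj => Hf j (or_intror Hj))).
- have -> // : (fun i => teval par u (args i)) = (fun i => teval par' u' (args i)).
  apply: functional_extensionality => i; apply: teval_coinc; first exact: Hp.
  by move=> j Hj; apply: Hf; exists i.
- by rewrite (IH u u').
- case: Hp => Hp1 Hp2.
  by rewrite (IH u u') ?(IH' u u') // => j Hj; apply: Hf; tauto.
- have Hx x : sat par (update u k x) psi <-> sat par' (update u' k x) psi.
    apply: IH => // j Hj.
    case: (PeanoNat.Nat.eq_dec j k) => [->|jk]; first by rewrite !update_same.
    by rewrite !update_other //; apply: Hf; split=> // kj; apply: jk.
  by split=> -[x /Hx Hsat]; exists x.
Qed.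

Fixpoint tclose P (s : nat -> option P) (t : term L P) : term L P :=
  match t with
  | tvar k => match s k with Some c => tpar c | None => tvar k end
  | tpar c => tpar c
  | @tfun _ _ f args => @tfun _ _ f (fun i => tclose s (args i))
  end.

Fixpoint fclose P (s : nat -> option P) (phi : formula L P) : formula L P :=
  match phi with
  | fEq t1 t2 => fEq (tclose s t1) (tclose s t2)
  | @fRel _ _ r args => @fRel _ _ r (fun i => tclose s (args i))
  | fNot psi => fNot (fclose s psi)
  | fAnd psi chi => fAnd (fclose s psi) (fclose s chi)
  | fEx k psi => fEx k (fclose (fun j => if Nat.eqb j k then None else s j) psi)
  end.

Definition override (M : Type) P (par : P -> M) (s : nat -> option P) (u : nat -> M) :=
  fun k => match s k with Some c => par c | None => u k end.

Lemma teval_close (M : structure L) P (par : P -> M) s u t :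
  teval par u (tclose s t) = teval par (override par s u) t.
Proof.
elim/term_nested_ind: t => [k|c|f args IH] //=.
- by rewrite /override; case: (s k).
- by congr (fun_int _); apply: functional_extensionality => i.
Qed.

Lemma sat_close (M : structure L) P (par : P -> M) phi : forall s u,
  sat par u (fclose s phi) <-> sat par (override par s u) phi.
Proof.
elim: phi => [t1 t2|r args|psi IH|psi IH chi IH'|k psi IH] s u /=.
- by rewrite !teval_close.
- suff -> : (fun i => teval par u (tclose s (args i)))
          = (fun i => teval par (override par s u) (args i)) by [].
  by apply: functional_extensionality => i; rewrite teval_close.
- by rewrite IH.
- by rewrite IH IH'.
- have Eu x : override par (fun j => if Nat.eqb j k then None else s j) (update u k x)
            = update (override par s u) k x.
    by apply: functional_extensionality => j; rewrite /override /update; case: (Nat.eqb j k).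
  by split=> -[x Hx]; exists x; move: Hx; rewrite IH Eu.
Qed.

Lemma tfree_close P s t j : tfree j (@tclose P s t) -> tfree j t /\ s j = None.
Proof.
elim/term_nested_ind: t => [k|c|f args IH] //=.
- by case E: (s k) => [c|] //= <-.
- by move=> [i /IH [H1 H2]]; split=> //; exists i.
Qed.

Lemma ffree_close P phi : forall s j, ffree j (@fclose P s phi) -> ffree j phi /\ s j = None.
Proof.
elim: phi => [t1 t2|r args|psi IH|psi IH chi IH'|k psi IH] s j /=.
- by case=> /tfree_close [? ?]; split=> //; [left|right].
- by move=> [i /tfree_close [? ?]]; split=> //; exists i.
- exact: IH.
- by case=> [/IH [? ?]|/IH' [? ?]]; split=> //; tauto.
- move=> [kj /IH [H1 H2]]; split=> //.
  by move: H2; move/PeanoNat.Nat.eqb_neq: (nesym kj) => ->.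
Qed.

Lemma tparams_close P (A : P -> Prop) s t :
  (forall k c, s k = Some c -> A c) -> tparams A t -> tparams A (tclose s t).
Proof.
move=> Hs; elim/term_nested_ind: t => [k|c|f args IH] //=.
- by case E: (s k) => [c|] //= _; exact: Hs E.
- by move=> H i; apply: IH.
Qed.

Lemma fparams_close P (A : P -> Prop) phi : forall s,
  (forall k c, s k = Some c -> A c) -> fparams A phi -> fparams A (fclose s phi).
Proof.
elim: phi => [t1 t2|r args|psi IH|psi IH chi IH'|k psi IH] s Hs /=.
- by case=> ? ?; split; apply: tparams_close.
- by move=> H i; apply: tparams_close.
- exact: IH.
- by case=> ? ?; split; [apply: IH|apply: IH'].
- by apply: IH => j c; case: (Nat.eqb j k) => //; exact: Hs.
Qed.

Fixpoint tshift P (m : nat) (t : term L P) : term L P :=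
  match t with
  | tvar k => tvar (k + m)
  | tpar c => tpar c
  | @tfun _ _ f args => @tfun _ _ f (fun i => tshift m (args i))
  end.

Fixpoint fshift P (m : nat) (phi : formula L P) : formula L P :=
  match phi with
  | fEq t1 t2 => fEq (tshift m t1) (tshift m t2)
  | @fRel _ _ r args => @fRel _ _ r (fun i => tshift m (args i))
  | fNot psi => fNot (fshift m psi)
  | fAnd psi chi => fAnd (fshift m psi) (fshift m chi)
  | fEx k psi => fEx (k + m) (fshift m psi)
  end.

Lemma teval_shift (M : structure L) P (par : P -> M) m u t :
  teval par u (tshift m t) = teval par (fun k => u (k + m)) t.
Proof.
elim/term_nested_ind: t => [k|c|f args IH] //=.
by congr (fun_int _); apply: functional_extensionality => i.
Qed.

Lemma sat_shift (M : structure L) P (par : P -> M) m phi : forall u,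
  sat par u (fshift m phi) <-> sat par (fun k => u (k + m)) phi.
Proof.
elim: phi => [t1 t2|r args|psi IH|psi IH chi IH'|k psi IH] u /=.
- by rewrite !teval_shift.
- suff -> : (fun i => teval par u (tshift m (args i)))
          = (fun i => teval par (fun k => u (k + m)) (args i)) by [].
  by apply: functional_extensionality => i; rewrite teval_shift.
- by rewrite IH.
- by rewrite IH IH'.
- have Eu x : (fun j => update u (k + m) x (j + m)) = update (fun j => u (j + m)) k x.
    apply: functional_extensionality => j; rewrite /update.
    case: (PeanoNat.Nat.eqb_spec (j + m) (k + m)) => [/addIn ->|jk].
    - by rewrite PeanoNat.Nat.eqb_refl.
    - by case: PeanoNat.Nat.eqb_spec => // jk'; rewrite jk' in jk.
  by split=> -[x Hx]; exists x; move: Hx; rewrite IH Eu.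
Qed.

Lemma tfree_shift P m t j : tfree j (@tshift P m t) -> exists i, j = i + m /\ tfree i t.
Proof.
elim/term_nested_ind: t => [k|c|f args IH] //=.
- by move=> <-; exists k.
- by move=> [i /IH [i' [-> H]]]; exists i'; split=> //; exists i.
Qed.

Lemma ffree_shift P m phi : forall j,
  ffree j (@fshift P m phi) -> exists i, j = i + m /\ ffree i phi.
Proof.
elim: phi => [t1 t2|r args|psi IH|psi IH chi IH'|k psi IH] j /=.
- by case=> /tfree_shift [i [-> H]]; exists i; split=> //; [left|right].
- by move=> [i' /tfree_shift [i [-> H]]]; exists i; split=> //; exists i'.
- exact: IH.
- by case=> [/IH [i [-> H]]|/IH' [i [-> H]]]; exists i; split=> //; tauto.
- move=> [kj /IH [i [ji H]]]; exists i; split=> //; split=> // ki.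
  by apply: kj; rewrite ji ki.
Qed.

Lemma fparams_shift P (A : P -> Prop) m phi : fparams A phi -> fparams A (fshift m phi).
Proof.
have tparams_shift t : tparams A t -> tparams A (tshift m t).
  by elim/term_nested_ind: t => [k|c|f args IH] //= H i; apply: IH.
elim: phi => [t1 t2|r args|psi IH|psi IH chi IH'|k psi IH] /=.
- by case=> ? ?; split; apply: tparams_shift.
- by move=> H i; apply: tparams_shift.
- exact: IH.
- by case=> ? ?; split; [apply: IH|apply: IH'].
- exact: IH.
Qed.

Fixpoint bound_vars_ge P (m : nat) (phi : formula L P) : Prop :=
  match phi with
  | fNot psi => bound_vars_ge m psi
  | fAnd psi chi => bound_vars_ge m psi /\ bound_vars_ge m chi
  | fEx k psi => m <= k /\ bound_vars_ge m psi
  | _ => True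
  end.

Lemma bound_vars_ge_shift P m (phi : formula L P) : bound_vars_ge m (fshift m phi).
Proof. by elim: phi => //= *; split=> //; rewrite leq_addl. Qed.

Fixpoint tabstract P (g : P -> option nat) (t : term L P) : term L P :=
  match t with
  | tvar k => tvar k
  | tpar c => match g c with Some i => tvar i | None => tpar c end
  | tfun f args => @tfun _ _ f (fun i => tabstract g (args i))
  end.

Fixpoint fabstract P (g : P -> option nat) (phi : formula L P) : formula L P :=
  match phi with
  | fEq t1 t2 => fEq (tabstract g t1) (tabstract g t2)
  | fRel r args => @fRel _ _ r (fun i => tabstract g (args i))
  | fNot psi => fNot (fabstract g psi)
  | fAnd psi chi => fAnd (fabstract g psi) (fabstract g chi)
  | fEx k psi => fEx k (fabstract g psi)
  end.

Definition abstract_par (M : Type) P (g : P -> option nat) (par : P -> M) (u : nat -> M) :=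
  fun c => match g c with Some i => u i | None => par c end.

Lemma teval_abstract (M : structure L) P (par : P -> M) g u t :
  teval par u (tabstract g t) = teval (abstract_par g par u) u t.
Proof.
elim/term_nested_ind: t => [k|c|f args IH] //=.
- by rewrite /abstract_par; case: (g c).
- by congr (fun_int _); apply: functional_extensionality => i.
Qed.

(* Sound as long as no bound variable captures an abstracted parameter. *)
Lemma sat_abstract (M : structure L) P (par : P -> M) g m phi :
  (forall c i, g c = Some i -> i < m) -> bound_vars_ge m phi -> forall u,
  sat par u (fabstract g phi) <-> sat (abstract_par g par u) u phi.
Proof.
move=> Hg; elim: phi => [t1 t2|r args|psi IH|psi IH chi IH'|k psi IH] /= Hb u.
- by rewrite !teval_abstract.
- suff -> : (fun i => teval par u (tabstract g (args i)))
          = (fun i => teval (abstract_par g par u) u (args i)) by [].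
  by apply: functional_extensionality => i; rewrite teval_abstract.
- by rewrite IH.
- by case: Hb => ? ?; rewrite IH ?IH'.
- case: Hb => mk Hb.
  have Epar x : abstract_par g par (update u k x) = abstract_par g par u.
    apply: functional_extensionality => c; rewrite /abstract_par.
    case E: (g c) => [i|] //; rewrite update_other // => ik.
    by move: (leq_trans (Hg _ _ E) mk); rewrite ik ltnn.
  by split=> -[x Hx]; exists x; move: Hx; rewrite IH // Epar.
Qed.

Lemma ffree_abstract P g phi : forall j,
  ffree j (@fabstract P g phi) -> ffree j phi \/ exists c, g c = Some j.
Proof.
have tfree_abstract t j : tfree j (tabstract g t) -> tfree j t \/ exists c, g c = Some j.
  elim/term_nested_ind: t => [k|c|f args IH] //=.
  - by move=> ->; left.
  - by case E: (g c) => [i|] //= <-; right; exists c.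
  - by move=> [i /IH [H|H]]; [left; exists i|right].
elim: phi => [t1 t2|r args|psi IH|psi IH chi IH'|k psi IH] j /=.
- by case=> /tfree_abstract [H|H]; try (by right); left; [left|right].
- by move=> [i /tfree_abstract [H|H]]; [left; exists i|right].
- exact: IH.
- by case=> [/IH [H|H]|/IH' [H|H]]; try (by right); left; tauto.
- by move=> [kj /IH [H|H]]; [left|right].
Qed.

Lemma fparams_abstract P (A : P -> Prop) g phi :
  fparams (fun c => g c = None -> A c) phi -> fparams A (fabstract g phi).
Proof.
have tparams_abstract t : tparams (fun c => g c = None -> A c) t -> tparams A (tabstract g t).
  elim/term_nested_ind: t => [k|c|f args IH] //=.
  - by case: (g c) => [i|] // H; apply: H.
  - by move=> H i; apply: IH.
elim: phi => [t1 t2|r args|psi IH|psi IH chi IH'|k psi IH] /=.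
- by case=> ? ?; split; apply: tparams_abstract.
- by move=> H i; apply: tparams_abstract.
- exact: IH.
- by case=> ? ?; split; [apply: IH|apply: IH'].
- exact: IH.
Qed.

End Syntax.

Section ParamList.
Variable L : language.

Lemma In_of_mem (T : eqType) (x : T) (s : list T) : x \in s -> List.In x s.
Proof. by elim: s => [|a s IH] //; rewrite seq.in_cons => /orP [/eqP ->|/IH] /=; tauto. Qed.

Lemma In_concat_enum P k (g : 'I_k -> list P) c :
  List.In c (List.concat (List.map g (enum 'I_k))) <-> exists i, List.In c (g i).
Proof.
rewrite List.in_concat; split=> [[x [/List.in_map_iff [i [<- _]] H]]|[i H]].
- by exists i.
- by exists (g i); split=> //; apply: List.in_map; apply: In_of_mem; rewrite mem_enum.
Qed.

Fixpoint tparam_list P (t : term L P) : list P :=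
  match t with
  | tvar _ => nil
  | tpar c => c :: nil
  | @tfun _ _ f args =>
      List.concat (List.map (fun i => tparam_list (args i)) (enum 'I_(farity f)))
  end.

Fixpoint fparam_list P (phi : formula L P) : list P :=
  match phi with
  | fEq t1 t2 => tparam_list t1 ++ tparam_list t2
  | @fRel _ _ r args =>
      List.concat (List.map (fun i => tparam_list (args i)) (enum 'I_(rarity r)))
  | fNot psi => fparam_list psi
  | fAnd psi chi => fparam_list psi ++ fparam_list chi
  | fEx _ psi => fparam_list psi
  end.

Lemma tparam_list_params P (t : term L P) : tparams (fun c => List.In c (tparam_list t)) t.
Proof.
elim/term_nested_ind: t => [k|c|f args IH] //=; first by left.
move=> i; apply: tparams_mono (IH i) => c H; apply/In_concat_enum; by exists i.
Qed.

Lemma tparam_list_sub P (A : P -> Prop) (t : term L P) :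
  tparams A t -> forall c, List.In c (tparam_list t) -> A c.
Proof.
elim/term_nested_ind: t => [k|c|f args IH] //=; first by move=> H c' [<-|].
by move=> H c /In_concat_enum [i Hi]; apply: (IH i).
Qed.

Lemma fparam_list_params P (phi : formula L P) :
  fparams (fun c => List.In c (fparam_list phi)) phi.
Proof.
elim: phi => [t1 t2|r args|psi IH|psi IH chi IH'|k psi IH] //=.
- split; [apply: tparams_mono (tparam_list_params t1)|
          apply: tparams_mono (tparam_list_params t2)] => c H; apply: List.in_or_app; tauto.
- move=> i; apply: tparams_mono (tparam_list_params (args i)) => c H.
  by apply/In_concat_enum; exists i.
- split; [apply: fparams_mono IH|apply: fparams_mono IH'] => c H; apply: List.in_or_app; tauto.
Qed.

Lemma fparam_list_sub P (A : P -> Prop) (phi : formula L P) :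
  fparams A phi -> forall c, List.In c (fparam_list phi) -> A c.
Proof.
elim: phi => [t1 t2|r args|psi IH|psi IH chi IH'|k psi IH] //=.
- move=> [H1 H2] c /List.in_app_iff [H|H]; [exact: tparam_list_sub H1 _ H|
                                            exact: tparam_list_sub H2 _ H].
- by move=> H c /In_concat_enum [i Hi]; apply: tparam_list_sub (H i) _ Hi.
- by move=> [H1 H2] c /List.in_app_iff [H|H]; [exact: IH H1 _ H|exact: IH' H2 _ H].
Qed.

End ParamList.

(** ** Automorphisms, definable and algebraic closure *)

Section Automorphisms.
Variable L : language.
Variable C : structure L.

Lemma aut_inj (s : C -> C) : automorphism s -> forall x y, s x = s y -> x = y.
Proof. by move=> [[s' [s'K _]] _] x y Exy; rewrite -(s'K x) -(s'K y) Exy. Qed.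

Lemma aut_id : automorphism (fun x : C => x).
Proof. by split; first exists (fun x => x). Qed.

Lemma aut_comp (s t : C -> C) :
  automorphism s -> automorphism t -> automorphism (fun x => s (t x)).
Proof.
move=> [[s' [sK s'K]] [Hf Hr]] [[t' [tK t'K]] [Hf' Hr']]; split.
- by exists (fun x => t' (s' x)); split=> x; rewrite ?sK ?tK ?t'K ?s'K.
- by split=> [f args|r args]; [rewrite Hf' Hf|rewrite Hr' Hr].
Qed.

Lemma aut_inv (s : C -> C) : automorphism s ->
  exists s', automorphism s' /\ (forall x, s' (s x) = x) /\ (forall x, s (s' x) = x).
Proof.
move=> Hs; have s_inj := aut_inj Hs.
case: Hs => [[s' [sK s'K]] [Hf Hr]]; exists s'; split=> //; split.
- by exists s.
- split=> [f args|r args].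
  + apply: s_inj; rewrite s'K Hf; congr (fun_int _).
    by apply: functional_extensionality => i; rewrite s'K.
  + rewrite (Hr r (fun i => s' (args i))).
    suff -> : (fun i => s (s' (args i))) = args by [].
    by apply: functional_extensionality => i; rewrite s'K.
Qed.

Definition aut_over (A : C -> Prop) (s : C -> C) : Prop :=
  automorphism s /\ forall x, A x -> s x = x.

Lemma aut_over_comp (A : C -> Prop) (s t : C -> C) :
  aut_over A s -> aut_over A t -> aut_over A (fun x => s (t x)).
Proof.
move=> [Hs sA] [Ht tA]; split; first exact: aut_comp.
by move=> x Ax; rewrite tA // sA.
Qed.

Lemma aut_over_inv (A : C -> Prop) (s : C -> C) : aut_over A s ->
  exists s', aut_over A s' /\ (forall x, s' (s x) = x) /\ (forall x, s (s' x) = x).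
Proof.
move=> [Hs sA]; have [s' [Hs' [s'K sK]]] := aut_inv Hs.
by exists s'; split=> //; split=> // x Ax; rewrite -{1}(sA x Ax) s'K.
Qed.

Lemma teval_aut P (s : C -> C) (par : P -> C) u t : automorphism s ->
  teval (fun c => s (par c)) (fun k => s (u k)) t = s (teval par u t).
Proof.
move=> [_ [Hf _]]; elim/term_nested_ind: t => [k|c|f args IH] //=.
by rewrite Hf; congr (fun_int _); apply: functional_extensionality => i.
Qed.

Lemma sat_aut P (s : C -> C) (par : P -> C) (phi : formula L P) : automorphism s ->
  forall u, sat par u phi <-> sat (fun c => s (par c)) (fun k => s (u k)) phi.
Proof.
move=> Hs; have s_inj := aut_inj Hs; have [s' [_ [s'K sK]]] := aut_inv Hs.
elim: phi => [t1 t2|r args|psi IH|psi IH chi IH'|k psi IH] u /=.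
- by rewrite !teval_aut //; split=> [->|/s_inj].
- suff -> : (fun i => teval (fun c => s (par c)) (fun k => s (u k)) (args i))
          = (fun i => s (teval par u (args i))) by case: Hs => _ [_ Hr]; apply: Hr.
  by apply: functional_extensionality => i; rewrite teval_aut.
- by rewrite IH.
- by rewrite IH IH'.
- have Eu x : (fun j => s (update u k x j)) = update (fun j => s (u j)) k (s x).
    by apply: functional_extensionality => j; rewrite /update; case: (Nat.eqb j k).
  split=> -[x Hx].
  + by exists (s x); rewrite -Eu -IH.
  + by exists (s' x); rewrite IH Eu sK.
Qed.

Lemma sat_aut_fix (s : C -> C) (A : C -> Prop) (phi : fml C) u :
  aut_over A s -> fparams A phi -> (sat id u phi <-> sat id (fun k => s (u k)) phi).
Proof.
move=> [Hs HA] Hp; rewrite (sat_aut id phi Hs).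
by apply: sat_coinc => //; apply: (fparams_mono _ Hp) => c /HA.
Qed.

Definition tuple_val m (b : 'I_m -> C) (c0 : C) : nat -> C :=
  fun k => odflt c0 (omap b (insub k)).

Lemma tuple_valE m (b : 'I_m -> C) c0 (i : 'I_m) : tuple_val b c0 i = b i.
Proof. by rewrite /tuple_val valK. Qed.

Lemma sat_tuple_val m (b : 'I_m -> C) c0 (A : C -> Prop) phi : LB_formula m A phi ->
  (sat_tuple b phi <-> sat id (tuple_val b c0) phi).
Proof.
move=> [_ Hf]; split=> [H|H v Hv]; first by apply: H => i; rewrite tuple_valE.
have Hpar : fparams (fun c : C => id c = id c) phi.
  exact: fparams_mono (fparams_true phi).
have Hval k : ffree k phi -> tuple_val b c0 k = v k.
  by move=> /Hf /ltP km; rewrite -[k]/(nat_of_ord (Ordinal km)) tuple_valE Hv.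
exact: (proj1 (sat_coinc Hpar Hval) H).
Qed.

Lemma sat_tuple_not m (b : 'I_m -> C) (phi : fml C) :
  inhabited C -> sat_tuple b phi -> ~ sat_tuple b (fNot phi).
Proof.
case=> c0 H1 H2.
exact: (H2 (tuple_val b c0) (tuple_valE b c0) (H1 (tuple_val b c0) (tuple_valE b c0))).
Qed.

Lemma sat1_tuple (phi : fml C) b : sat1 phi b <-> sat_tuple (fun _ : 'I_1 => b) phi.
Proof.
split=> [H v Hv|H v Hv]; first exact: (H v (Hv ord0)).
by apply: H => -[[|k] Hk].
Qed.

Lemma sat_tuple_aut (s : C -> C) (A : C -> Prop) m (a : 'I_m -> C) (phi : fml C) :
  aut_over A s -> fparams A phi -> sat_tuple a phi -> sat_tuple (fun i => s (a i)) phi.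
Proof.
move=> Hs Hp H v Hv.
have [s' [_ [s'K sK]]] := aut_inv (proj1 Hs).
have <- : (fun k => s (s' (v k))) = v by apply: functional_extensionality => k; rewrite sK.
by rewrite -(sat_aut_fix _ Hs Hp); apply: H => i; rewrite Hv s'K.
Qed.

Lemma sat1_aut (s : C -> C) (A : C -> Prop) (phi : fml C) x :
  aut_over A s -> fparams A phi -> sat1 phi x -> sat1 phi (s x).
Proof. by move=> Hs Hp; rewrite !sat1_tuple; apply: sat_tuple_aut Hs Hp. Qed.

Lemma dcl_fixed (s : C -> C) (A : C -> Prop) x : aut_over A s -> dcl A x -> s x = x.
Proof.
move=> Hs [phi [[Hp _] Hdef]]; apply/Hdef.
by apply: (sat1_aut Hs Hp); apply/Hdef.
Qed.

Lemma aut_over_dcl (s : C -> C) (A : C -> Prop) : aut_over A s -> aut_over (dcl A) s.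
Proof. by move=> Hs; split=> [|x]; [case: Hs|apply: dcl_fixed]. Qed.

Lemma LB_mono m (A B : C -> Prop) (phi : fml C) :
  (forall x, A x -> B x) -> LB_formula m A phi -> LB_formula m B phi.
Proof. by move=> AB [Hp Hf]; split=> //; apply: fparams_mono Hp. Qed.

Lemma LB_and m (A : C -> Prop) (phi psi : fml C) :
  LB_formula m A phi -> LB_formula m A psi -> LB_formula m A (fAnd phi psi).
Proof. by move=> [H1 H2] [H3 H4]; split; [split|move=> k [/H2|/H4]]. Qed.

Lemma sat1_and (phi psi : fml C) x : sat1 (fAnd phi psi) x <-> sat1 phi x /\ sat1 psi x.
Proof.
split=> [H|[H1 H2] v Hv]; last by split; [apply: H1|apply: H2].
by split=> v Hv; case: (H v Hv).
Qed.

Lemma dcl_mono (A B : C -> Prop) x : (forall y, A y -> B y) -> dcl A x -> dcl B x.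
Proof. by move=> AB [phi [Lphi Hdef]]; exists phi; split=> //; apply: LB_mono Lphi. Qed.

Lemma acl_mono (A B : C -> Prop) x : (forall y, A y -> B y) -> acl A x -> acl B x.
Proof. by move=> AB [phi [Lphi Halg]]; exists phi; split=> //; apply: LB_mono Lphi. Qed.

Lemma dcl_acl (A : C -> Prop) x : dcl A x -> acl A x.
Proof.
move=> [phi [Lphi Hdef]]; exists phi; split=> //; split; first exact/Hdef.
by exists (x :: nil) => c /Hdef ->; left.
Qed.

Lemma dcl_self (A : C -> Prop) x : A x -> dcl A x.
Proof.
move=> Ax; exists (fEq (tvar 0) (tpar x)); split.
- by split=> // k [/= <-|//]; apply/ltP.
- move=> c; split=> [H|-> v Hv /=]; last by rewrite Hv.
  exact: (H (fun _ => c)).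
Qed.

Lemma acl_self (A : C -> Prop) x : A x -> acl A x.
Proof. by move=> /dcl_self /dcl_acl. Qed.

End Automorphisms.

(** ** Formulas over [A ∪ b] as formulas over [A] about [b] *)

Section Internalize.
Variable L : language.
Variable C : structure L.
Variable A : C -> Prop.
Variable m : nat.
Variable b : 'I_m -> C.

Definition tuple_index (c : C) : option 'I_m :=
  match excluded_middle_informative (exists i, c = b i /\ ~ A c) with
  | left H => Some (proj1_sig (constructive_indefinite_description _ H))
  | right _ => None
  end.

Lemma tuple_index_some c i : tuple_index c = Some i -> c = b i /\ ~ A c.
Proof.
rewrite /tuple_index; case: excluded_middle_informative => // H [<-].
by case: constructive_indefinite_description.
Qed.

Lemma tuple_index_none c : tuple_index c = None -> ~ exists i, c = b i /\ ~ A c.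
Proof. by rewrite /tuple_index; case: excluded_middle_informative. Qed.

Lemma tuple_index_none_in_A c : add_tuple A b c -> tuple_index c = None -> A c.
Proof.
move=> [//|[i ci]] /tuple_index_none Hnone.
by apply: NNPP => nA; apply: Hnone; exists i.
Qed.

Definition rename_tuple (w : nat -> C) (c : C) : C :=
  match tuple_index c with Some i => w i | None => c end.

Lemma rename_tuple_id c0 : rename_tuple (tuple_val b c0) = id.
Proof.
apply: functional_extensionality => c; rewrite /rename_tuple.
by case E: (tuple_index c) => [i|] //=; rewrite tuple_valE; case: (tuple_index_some E).
Qed.

Lemma internalize (phi : fml C) (v : nat -> C) :
  fparams (add_tuple A b) phi -> (forall k, add_tuple A b (v k)) ->
  exists chi, LB_formula m A chi /\ forall w : nat -> C,
    sat id w chi <-> sat (rename_tuple w) (fun k => rename_tuple w (v k)) phi.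
Proof.
move=> Hp Hv.
pose g c := omap (@nat_of_ord m) (tuple_index c).
have Hg c i : g c = Some i -> i < m.
  by rewrite /g; case: (tuple_index c) => [j|] //= [<-]; exact: ltn_ord.
have gA c : add_tuple A b c -> g c = None -> A c.
  by move=> Hc; rewrite /g; case E: (tuple_index c) => //= _; apply: tuple_index_none_in_A.
exists (fabstract g (fshift m (fclose (fun k => Some (v k)) phi))); split; first split.
- apply/fparams_abstract/fparams_shift/fparams_close.
  + by move=> k c [<-]; apply: gA.
  + by apply: (fparams_mono _ Hp) => c; apply: gA.
- move=> k /ffree_abstract [/ffree_shift [i [_ /ffree_close [_ //]]]|[c Hc]].
  by apply/ltP; exact: Hg Hc.
- move=> w; rewrite (sat_abstract id Hg (bound_vars_ge_shift m _)) sat_shift sat_close.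
  suff -> : abstract_par g id w = rename_tuple w by [].
  by apply: functional_extensionality => c; rewrite /abstract_par /g /rename_tuple;
     case: (tuple_index c).
Qed.

End Internalize.

Section TypeInclusion.
Variable L : language.
Variable C : structure L.
Variable A : C -> Prop.
Variable m : nat.
Variables b b' : 'I_m -> C.
Variable c0 : C.
Hypothesis type_incl :
  forall chi, LB_formula m A chi -> sat_tuple b chi -> sat_tuple b' chi.

Lemma type_incl_in_A i : A (b i) -> b' i = b i.
Proof.
move=> Ai.
have H : sat_tuple b' (fEq (tvar (nat_of_ord i)) (tpar (b i)) : fml C).
  apply: type_incl; last by move=> v Hv /=; rewrite Hv.
  by split=> // k [/= <-|//]; apply/ltP.
by have := H (tuple_val b' c0) (tuple_valE b' c0); rewrite /= tuple_valE.
Qed.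

Lemma type_incl_eq i j : b i = b j -> b' i = b' j.
Proof.
move=> bij.
have H : sat_tuple b' (fEq (tvar (nat_of_ord i)) (tvar (nat_of_ord j)) : fml C).
  apply: type_incl; last by move=> v Hv /=; rewrite !Hv.
  by split=> // k [/= <-|/= <-]; apply/ltP.
by have := H (tuple_val b' c0) (tuple_valE b' c0); rewrite /= !tuple_valE.
Qed.

Definition tuple_map : C -> C := rename_tuple A b (tuple_val b' c0).

Lemma tuple_map_A x : A x -> tuple_map x = x.
Proof.
rewrite /tuple_map /rename_tuple => Ax; case E: (tuple_index A b x) => [i|] //.
by case: (tuple_index_some E).
Qed.

Lemma tuple_map_b i : tuple_map (b i) = b' i.
Proof.
rewrite /tuple_map /rename_tuple; case E: (tuple_index A b (b i)) => [j|].
- by rewrite tuple_valE; case: (tuple_index_some E) => /type_incl_eq.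
- by rewrite type_incl_in_A //; apply: tuple_index_none_in_A E; right; exists i.
Qed.

(* If [tp(b/A) ⊆ tp(b'/A)], the map [tuple_map] is elementary on [A ∪ b]: a
   formula over [A ∪ b] becomes, by [internalize], a formula over [A] about [b]. *)
Lemma tuple_map_elementary : elementary_on (add_tuple A b) tuple_map.
Proof.
have preserve (phi : fml C) v : fparams (add_tuple A b) phi ->
    (forall k, add_tuple A b (v k)) -> sat id v phi -> sat tuple_map (fun k => tuple_map (v k)) phi.
  move=> Hp Hv Hsat; have [chi [Lchi Hchi]] := internalize Hp Hv.
  have Hb : sat_tuple b chi.
    by apply/(sat_tuple_val b c0 Lchi)/Hchi; rewrite rename_tuple_id.
  by move: (type_incl Lchi Hb) => /(sat_tuple_val b' c0 Lchi) /Hchi.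
move=> phi Hp v Hv; split; first exact: preserve.
by move=> Hsat; apply: NNPP => /(preserve (fNot phi) _ Hp Hv).
Qed.

End TypeInclusion.

(** ** Small sets *)

Section Small.
Variable kappa : Type.

Lemma sig_inj X (A : X -> Prop) (x y : {z | A z}) : proj1_sig x = proj1_sig y -> x = y.
Proof. by case: x y => [x Ax] [y Ay] /= xy; subst y; congr exist; apply: proof_irrelevance. Qed.

Lemma inj_seq_from (gN : nat -> kappa) : (forall x y, gN x = gN y -> x = y) ->
  forall y0, exists z : nat -> kappa, z 0 = y0 /\ (forall x y, z x = z y -> x = y).
Proof.
move=> gN_inj y0; case: (classic (exists k0, y0 = gN k0)) => [[k0 ->]|y0_new].
- exists (fun j => gN (k0 + j)); split; first by rewrite addn0.
  by move=> x y /gN_inj /eqP; rewrite eqn_add2l => /eqP.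
- exists (fun j => if j is j'.+1 then gN j' else y0); split=> //.
  case=> [|x] [|y] // => [E|E|/gN_inj -> //]; exfalso; apply: y0_new.
  + by exists y.
  + by exists x.
Qed.

Lemma hilbert_hotel (gN : nat -> kappa) : (forall x y, gN x = gN y -> x = y) ->
  forall y0, exists iota : kappa -> kappa,
    (forall x y, iota x = iota y -> x = y) /\ (forall y, iota y <> y0).
Proof.
move=> gN_inj y0; have [z [z0 z_inj]] := inj_seq_from gN_inj y0.
pose iota y := match excluded_middle_informative (exists j, y = z j) with
  | left H => z (proj1_sig (constructive_indefinite_description _ H)).+1
  | right _ => y end.
exists iota; split.
- move=> x y; rewrite /iota.
  case: excluded_middle_informative => Hx; case: excluded_middle_informative => Hy.
  + case: constructive_indefinite_description => j /= ->.
    by case: constructive_indefinite_description => j' /= -> /z_inj [->].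
  + by case: constructive_indefinite_description => j /= -> E; case: Hy; exists j.+1.
  + by case: constructive_indefinite_description => j /= -> E; case: Hx; exists j.+1.
  + by [].
- move=> y; rewrite /iota; case: excluded_middle_informative => Hy.
  + by case: constructive_indefinite_description => j /= _; rewrite -z0 => /z_inj.
  + by move=> E; apply: Hy; exists 0; rewrite z0.
Qed.

Lemma small_ext X (A B : X -> Prop) : (forall x, A x <-> B x) -> small kappa A -> small kappa B.
Proof.
move=> AB; suff -> : A = B by [].
by apply: functional_extensionality => x; apply: propositional_extensionality.
Qed.

Section AddOne.
Variables (X : Type) (A : X -> Prop) (c : X).
Hypothesis kappa_inf : lt_card nat kappa.
Hypothesis A_small : small kappa A.

Let A1 := fun x => A x \/ x = c.

(* [|A ∪ {c}| ≤ kappa], using [kappa + 1 = kappa] *)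
Lemma add1_inj : exists f : {x | A1 x} -> kappa, forall x y, f x = f y -> x = y.
Proof.
case: kappa_inf => [[gN gN_inj] _]; case: A_small => [[fA fA_inj] _].
have [iota [iota_inj iota_y0]] := hilbert_hotel gN_inj (gN 0).
exists (fun x => match excluded_middle_informative (A (proj1_sig x)) with
  | left H => iota (fA (exist _ (proj1_sig x) H)) | right _ => gN 0 end).
move=> [x Hx] [y Hy] /= E; apply: sig_inj => /=; move: E.
case: excluded_middle_informative => Ax; case: excluded_middle_informative => Ay.
- by move/iota_inj/fA_inj => [].
- by move/iota_y0.
- by move/esym/iota_y0.
- by move=> _; case: Hx => // ->; case: Hy.
Qed.

(* An injection of [kappa] into [A ∪ {c}] would yield one into [A]. *)
Lemma add1_no_inj : ~ exists g : kappa -> {x | A1 x}, forall x y, g x = g y -> x = y.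
Proof.
case: kappa_inf => [[gN gN_inj] _]; case: A_small => [_ no_inj] [g g_inj]; apply: no_inj.
have [iota [iota_inj avoid_y0]] : exists iota : kappa -> kappa,
    (forall x y, iota x = iota y -> x = y) /\ forall y, A (proj1_sig (g (iota y))).
  case: (classic (exists y0, ~ A (proj1_sig (g y0)))) => [[y0 ny0]|all_A].
  - have [iota [iota_inj iota_y0]] := hilbert_hotel gN_inj y0.
    exists iota; split=> // y; apply: NNPP => nA; apply: (iota_y0 y); apply: g_inj.
    by apply: sig_inj; case: (g (iota y)) nA => /= x [|->]; case: (g y0) ny0 => /= x' [|->].
  - exists id; split=> // y; apply: NNPP => nA; apply: all_A; by exists y.
exists (fun y => exist _ (proj1_sig (g (iota y))) (avoid_y0 y)).
by move=> x y [/sig_inj /g_inj /iota_inj].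
Qed.

Lemma small_add1 : small kappa A1.
Proof. by split; [exact: add1_inj|exact: add1_no_inj]. Qed.

End AddOne.

Lemma small_list X (A : X -> Prop) (l : list X) : lt_card nat kappa -> small kappa A ->
  small kappa (fun x => A x \/ List.In x l).
Proof.
move=> kappa_inf A_small; elim: l => [|a l IH].
- by apply: (small_ext _ A_small) => x /=; tauto.
- apply: (small_ext _ (small_add1 a kappa_inf IH)) => x /=.
  by split=> [[[H|H]|H]|[H|[H|H]]]; subst; auto.
Qed.

Lemma small_add_tuple L (C : structure L) (E : C -> Prop) m (a : 'I_m -> C) :
  lt_card nat kappa -> small kappa E -> small kappa (add_tuple E a).
Proof.
move=> kappa_inf E_small; apply: (small_ext _ (small_list (map a (enum 'I_m)) kappa_inf E_small)).
move=> x; rewrite /add_tuple; split=> -[Ex|Hx]; try tauto; right.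
- by case/List.in_map_iff: Hx => i [<- _]; exists i.
- by case: Hx => i ->; apply: List.in_map; apply: In_of_mem; rewrite mem_enum.
Qed.

End Small.

(** ** Lindenbaum's lemma *)

Section Lindenbaum.
Variable L : language.
Variable C : structure L.

Definition finsat (X : fml C -> Prop) : Prop :=
  forall l, (forall phi, List.In phi l -> X phi) ->
    exists v : nat -> C, forall phi, List.In phi l -> sat id v phi.

Variable B : C -> Prop.
Variable m : nat.
Variable r : fml C -> Prop.
Hypothesis r_LB : forall phi, r phi -> LB_formula m B phi.
Hypothesis r_finsat : finsat r.

Let consistent_ext (X : fml C -> Prop) : Prop :=
  (forall phi, X phi -> LB_formula m B phi) /\ finsat (fun phi => X phi \/ r phi).

Lemma finite_in_chain (F : (fml C -> Prop) -> Prop) :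
  classical_sets.total_on F classical_sets.subset -> forall l,
  (forall phi, List.In phi l -> (exists2 X, F X & X phi) \/ r phi) ->
  (forall phi, List.In phi l -> r phi) \/
  exists X, F X /\ forall phi, List.In phi l -> X phi \/ r phi.
Proof.
move=> Ftot; elim=> [|a l IH] Hl; first by left.
have := IH (fun phi Hp => Hl phi (or_intror Hp)).
case: (Hl a (or_introl erefl)) => [[X0 FX0 X0a]|ra] [allr|[X [FX HX]]].
- by right; exists X0; split=> // phi [<-|/allr]; tauto.
- right; case: (Ftot X X0 FX FX0) => sub.
  + by exists X0; split=> // phi [<-|/HX [/sub|]]; tauto.
  + by exists X; split=> // phi [<-|/HX]; [left; apply: sub|tauto].
- by left=> phi [<-|/allr].
- by right; exists X; split=> // phi [<-|/HX] //; tauto.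
Qed.

(* the union of a chain of consistent extensions is one: the Zorn hypothesis *)
Lemma consistent_ext_chain (F : (fml C -> Prop) -> Prop) :
  (forall X, F X -> consistent_ext X) ->
  classical_sets.total_on F classical_sets.subset ->
  consistent_ext (classical_sets.bigcup F id).
Proof.
move=> FP Ftot; split.
- by move=> phi [X FX Xphi]; apply: (proj1 (FP X FX)).
- move=> l Hl; case: (finite_in_chain Ftot Hl) => [allr|[X [FX HX]]].
  + exact: r_finsat.
  + exact: (proj2 (FP X FX)).
Qed.

Lemma maximal_refutes (X : fml C -> Prop) psi :
  consistent_ext X -> (forall Y, classical_sets.proper X Y -> ~ consistent_ext Y) ->
  LB_formula m B psi -> ~ (X psi \/ r psi) ->
  exists l, (forall chi, List.In chi l -> X chi \/ r chi) /\
    forall v, (forall chi, List.In chi l -> sat id v chi) -> ~ sat id v psi.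
Proof.
move=> [XLB _] Xmax Lpsi npsi.
have : ~ consistent_ext (fun chi => X chi \/ chi = psi).
  apply: Xmax; split; first by move=> chi H; left.
  by move=> H; apply: npsi; left; apply: (H psi (or_intror erefl)).
move=> ncons; apply: NNPP => nex; apply: ncons; split.
  by move=> chi [/XLB|->].
move=> l1 Hl1; apply: NNPP => nsat.
pose l := List.filter
  (fun chi => if excluded_middle_informative (chi = psi) then false else true) l1.
apply: nex; exists l; split.
- move=> chi /List.filter_In [/Hl1 H]; case: excluded_middle_informative => // nchi _.
  by case: H => [[|]|]; tauto.
- move=> v Hv Hpsi; apply: nsat; exists v => chi Hchi.
  case: (excluded_middle_informative (chi = psi)) => [->|nchi] //.
  by apply: Hv; apply/List.filter_In; split=> //; case: excluded_middle_informative.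
Qed.

(* A finitely satisfiable set of [L(B)]-formulas extends to a complete type
   over [B]: take a maximal consistent extension (Zorn). *)
Lemma lindenbaum : exists q, complete_type m B q /\ forall phi, r phi -> q phi.
Proof.
have [X [[XLB Xfin] Xmax]] : exists X, consistent_ext X /\
    forall Y, classical_sets.proper X Y -> ~ consistent_ext Y.
  by apply: classical_sets.Zorn_bigcup => F FP Ftot; apply: consistent_ext_chain.
exists (fun phi => X phi \/ r phi); split; last by move=> phi; right.
split; [|split] => //.
- by move=> phi [/XLB|/r_LB].
- move=> phi Lphi; apply: NNPP => nq.
  have [l1 [Hl1 Hv1]] := maximal_refutes (conj XLB Xfin) Xmax Lphi (fun H => nq (or_introl H)).
  have [l2 [Hl2 Hv2]] := @maximal_refutes X (fNot phi) (conj XLB Xfin) Xmax Lphi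
                           (fun H => nq (or_intror H)).
  have [v Hv] : exists v : nat -> C, forall chi, List.In chi (l1 ++ l2) -> sat id v chi.
    by apply: Xfin => chi Hchi; case: (List.in_app_or _ _ _ Hchi) => [/Hl1|/Hl2].
  case: (classic (sat id v phi)) => Hphi.
  + by apply: (Hv1 v) => // chi Hc; apply: Hv; apply: List.in_or_app; left.
  + by apply: (Hv2 v) => // chi Hc; apply: Hv; apply: List.in_or_app; right.
Qed.

End Lindenbaum.

(** ** The monster model *)

Section Monster.
Variable L : language.
Variable C : structure L.
Variable kappa : Type.
Hypothesis HC : monster C kappa.

Lemma aut_of_type_incl (A A0 : C -> Prop) m (b b' : 'I_m -> C) :
  small kappa A0 -> (forall x, A0 x -> A x) ->
  (forall chi, LB_formula m A chi -> sat_tuple b chi -> sat_tuple b' chi) ->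
  exists s, aut_over A0 s /\ forall i, s (b i) = b' i.
Proof.
move=> A0_small A0A Hincl; case: (monster_inhabited HC) => c0.
have Hf0 : elementary_on (add_tuple A0 b) (tuple_map A b b' c0).
  move=> phi Hp v Hv; apply: tuple_map_elementary => //.
  - by apply: fparams_mono Hp => x [/A0A|]; [left|right].
  - by move=> k; case: (Hv k) => [/A0A|]; [left|right].
have [s [Hs Hsf]] := monster_homogeneous HC
  (small_add_tuple b (monster_kappa_uncountable HC) A0_small) Hf0.
exists s; split; first split=> // x Hx.
- by rewrite Hsf ?tuple_map_A //; [apply: A0A|left].
- by move=> i; rewrite Hsf ?tuple_map_b //; right; exists i.
Qed.

Section GaloisDcl.
Variable A : C -> Prop.
Hypothesis A_small : small kappa A.
Variable b : C.
Hypothesis b_fixed : forall s, aut_over A s -> s b = b.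

Lemma separate_fixed (l : list C) : exists chi, LB_formula 1 A chi /\ sat1 chi b /\
  forall c, List.In c l -> c <> b -> ~ sat1 chi c.
Proof.
elim: l => [|c l [chi [Lchi [chi_b sep]]]].
  by exists (fEq (tvar 0) (tvar 0)); split=> //; split=> // k [/= <-|/= <-].
case: (classic (c = b)) => [->|cb].
  by exists chi; split=> //; split=> // c' [<-|/sep].
case: (classic (exists psi, LB_formula 1 A psi /\ sat1 psi b /\ ~ sat1 psi c))
  => [[psi [Lpsi [psi_b psi_c]]]|nsep].
- exists (fAnd chi psi); split; first exact: LB_and.
  split; first by apply/sat1_and.
  by move=> c' [<- _|Hc' nc'] /sat1_and [K1 K2] //; apply: (sep c' Hc' nc').
- exfalso; apply: cb.
  have Hincl psi : LB_formula 1 A psi -> sat_tuple (fun _ : 'I_1 => b) psi ->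
                   sat_tuple (fun _ : 'I_1 => c) psi.
    move=> Lpsi /sat1_tuple psi_b; apply/sat1_tuple; apply: NNPP => psi_c.
    by apply: nsep; exists psi.
  have [s [Hs sbc]] := aut_of_type_incl A_small (fun x H => H) Hincl.
  by rewrite -(sbc ord0) b_fixed.
Qed.

Lemma dcl_of_fixed : acl A b -> dcl A b.
Proof.
move=> [phi [Lphi [phi_b [l Hl]]]].
have [chi [Lchi [chi_b sep]]] := separate_fixed l.
exists (fAnd phi chi); split; first exact: LB_and.
move=> c; split=> [/sat1_and [K1 K2]|->]; last by apply/sat1_and.
by apply: NNPP => ncb; apply: (sep c (Hl c K1) ncb K2).
Qed.

End GaloisDcl.

Section GaloisAcl.
Variable A : C -> Prop.
Hypothesis A_small : small kappa A.
Variable e : C.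

Lemma type_conj (l : list (fml C)) : exists chi, LB_formula 1 A chi /\ sat1 chi e /\
  forall v, sat id v chi -> forall psi, List.In psi l ->
    LB_formula 1 A psi /\ sat1 psi e -> sat id v psi.
Proof.
elim: l => [|a l [chi [Lchi [chi_e Hall]]]].
  by exists (fEq (tvar 0) (tvar 0)); split=> //; split=> // k [/= <-|/= <-].
case: (classic (LB_formula 1 A a /\ sat1 a e)) => [[La a_e]|na].
- exists (fAnd a chi); split; first exact: LB_and.
  split; first by apply/sat1_and.
  by move=> v [Hv1 Hv2] psi [<-|Hp] // Hpsi; apply: Hall.
- by exists chi; split=> //; split=> // v Hv psi [<-|Hp] // Hpsi; apply: Hall.
Qed.

Lemma finsat_avoid (O : list C) : ~ acl A e ->
  finsat (fun phi : fml C => (LB_formula 1 A phi /\ sat1 phi e) \/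
    exists o, List.In o O /\ phi = fNot (fEq (tvar 0) (tpar o))).
Proof.
move=> nacl l Hl.
have [chi [Lchi [chi_e Hall]]] := type_conj l.
have [c [chi_c cO]] : exists c, sat1 chi c /\ ~ List.In c O.
  apply: NNPP => nex; apply: nacl; exists chi; split=> //; split=> //.
  by exists O => c Hc; apply: NNPP => nc; apply: nex; exists c.
exists (fun _ => c) => psi Hpsi.
case: (Hl psi Hpsi) => [H|[o [Ho ->]]].
- exact: (Hall _ (chi_c _ erefl)).
- by move=> /= co; apply: cO; rewrite co.
Qed.

Lemma acl_of_finite_orbit (O : list C) :
  (forall s, aut_over A s -> List.In (s e) O) -> acl A e.
Proof.
move=> Horb; apply: NNPP => nacl.
pose r (phi : fml C) := (LB_formula 1 A phi /\ sat1 phi e) \/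
  exists o, List.In o O /\ phi = fNot (fEq (tvar 0) (tpar o)).
pose B x := A x \/ List.In x O.
have r_LB phi : r phi -> LB_formula 1 B phi.
  move=> [[H _]|[o [Ho ->]]].
  - by apply: LB_mono H => x; left.
  - by split; [split=> //; right|move=> k [/= <-|//]].
have [q [Hq rq]] := lindenbaum r_LB (finsat_avoid nacl).
have [d Hd] := monster_saturated HC (small_list O (monster_kappa_uncountable HC) A_small) Hq.
have Hincl chi : LB_formula 1 A chi -> sat_tuple (fun _ : 'I_1 => e) chi -> sat_tuple d chi.
  by move=> Lchi /sat1_tuple chi_e; apply: Hd; apply: rq; left.
have [s [Hs se]] := aut_of_type_incl A_small (fun x H => H) Hincl.
have dO : List.In (d ord0) O by rewrite -(se ord0); apply: Horb.
case: (monster_inhabited HC) => c0.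
have := Hd _ (rq _ (or_intror (ex_intro _ (d ord0) (conj dO erefl)))).
by move/(_ (tuple_val d c0) (tuple_valE d c0)) => /=; rewrite (tuple_valE d c0 ord0).
Qed.

End GaloisAcl.

End Monster.

Section TypeOverAcl.
Variable L : language.
Variable C : structure L.
Variable kappa : Type.
Hypothesis HC : monster C kappa.
Variable E : C -> Prop.
Hypothesis E_small : small kappa E.
Variable n : nat.
Variable p : fml C -> Prop.
Hypothesis p_type : complete_type n E p.

Definition tp_acl (a : 'I_n -> C) : fml C -> Prop :=
  fun phi => LB_formula n (acl E) phi /\ sat_tuple a phi.

Lemma tp_acl_complete (a : 'I_n -> C) : complete_type n (acl E) (tp_acl a).
Proof.
case: (monster_inhabited HC) => c0.
split; [by move=> phi []|split].
- move=> phi Lphi; case: (classic (sat id (tuple_val a c0) phi)) => H.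
  + by left; split=> //; apply/(sat_tuple_val a c0 Lphi).
  + by right; split=> //; apply/(sat_tuple_val a c0 (Lphi : LB_formula n (acl E) (fNot phi))).
- move=> l Hl; exists (tuple_val a c0) => phi /Hl [Lphi Hsat].
  exact/(sat_tuple_val a c0 Lphi).
Qed.

Lemma tp_acl_extends (a : 'I_n -> C) : realizes a p -> forall phi, p phi -> tp_acl a phi.
Proof.
move=> Ha phi Hphi; split; last exact: Ha.
by apply: LB_mono (proj1 p_type _ Hphi) => x; apply: acl_self.
Qed.

Lemma realizes_aut (a : 'I_n -> C) s : realizes a p -> aut_over E s ->
  realizes (fun i => s (a i)) p.
Proof.
move=> Ha Hs phi Hphi; apply: (sat_tuple_aut Hs (proj1 (proj1 p_type _ Hphi))).
exact: Ha.
Qed.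

Lemma realizations_conjugate (a a' : 'I_n -> C) : realizes a p -> realizes a' p ->
  exists s, aut_over E s /\ forall i, s (a' i) = a i.
Proof.
move=> Ha Ha'; apply: (aut_of_type_incl HC E_small (fun x H => H)) => chi Lchi H.
case: (proj1 (proj2 p_type) chi Lchi) => Hc; first exact: Ha.
by exfalso; apply: (sat_tuple_not (monster_inhabited HC) H (Ha' _ Hc)).
Qed.

Section Stationary.
Hypothesis p_stationary : acl_stationary n E p.
Variable a : 'I_n -> C.
Hypothesis a_p : realizes a p.

Lemma stationary_fixes x s :
  dcl (dcl (add_tuple E a)) x -> acl E x -> aut_over E s -> s x = x.
Proof.
move=> x_dcl x_acl Hs.
have [q [_ [_ q_unique]]] := p_stationary.
have tp_q b : realizes b p -> forall phi, tp_acl b phi <-> q phi.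
  by move=> Hb; apply: q_unique; [apply: tp_acl_complete|apply: tp_acl_extends].
have sa_p := realizes_aut a_p Hs.
have Hincl chi : LB_formula n (acl E) chi -> sat_tuple (fun i => s (a i)) chi ->
                 sat_tuple a chi.
  move=> Lchi H; have /(tp_q a a_p) [] // : q chi.
  by apply/(tp_q _ sa_p).
have Ex_small : small kappa (fun y => E y \/ y = x).
  exact: small_add1 (monster_kappa_uncountable HC) E_small.
have Ex_acl y : E y \/ y = x -> acl E y by move=> [/acl_self|->].
have [t [Ht tsa]] := aut_of_type_incl HC Ex_small Ex_acl Hincl.
have ts_fix : aut_over (add_tuple E a) (fun y => t (s y)).
  split; first exact: aut_comp (proj1 Ht) (proj1 Hs).
  move=> y [Ey|[i ->]]; last exact: tsa.
  by rewrite (proj2 Hs) // (proj2 Ht) //; left.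
apply: (aut_inj (proj1 Ht)); rewrite (dcl_fixed (aut_over_dcl ts_fix) x_dcl).
by rewrite (proj2 Ht) //; right.
Qed.

Lemma stationary_primary : primary E (dcl (add_tuple E a)).
Proof.
split=> [x Ex|x]; first by apply: dcl_self; left.
split=> [[x_dcl x_acl]|x_dcl].
- apply: (dcl_of_fixed HC E_small _ x_acl) => s.
  exact: stationary_fixes x_dcl x_acl.
- split; last exact: dcl_acl.
  by apply: dcl_mono x_dcl => y Ey; apply: dcl_self; left.
Qed.

End Stationary.
End TypeOverAcl.

Lemma tuples_of_list (X : Type) (l : list X) k (x0 : X) :
  exists T : list ('I_k -> X), forall t : 'I_k -> X, (forall i, List.In (t i) l) ->
    exists t', List.In t' T /\ forall i, t i = t' i.
Proof.
exists (List.map (fun (F : {ffun 'I_k -> 'I_(length l)}) (i : 'I_k) => List.nth (F i) l x0)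
   (enum {ffun 'I_k -> 'I_(length l)})).
move=> t Ht.
have /fin_all_exists [u Hu] : forall i, exists j : 'I_(length l), List.nth j l x0 = t i.
  by move=> i; have [j [/ltP jl <-]] := List.In_nth _ _ x0 (Ht i); exists (Ordinal jl).
exists (fun i => List.nth (finfun u i) l x0); split.
- by apply: List.in_map; apply: In_of_mem; rewrite mem_enum.
- by move=> i; rewrite ffunE Hu.
Qed.

Lemma mem_tuple_filter L (C : structure L) k (P : ('I_k -> C) -> Prop)
  (S : list ('I_k -> C)) t :
  (forall t t', P t -> (forall i, t i = t' i) -> P t') ->
  mem_tuple t (List.filter (fun t => boolp.asbool (P t)) S) <-> mem_tuple t S /\ P t.
Proof.
move=> P_ext; split.
- move=> [t' [/List.filter_In [t'S /boolp.asboolP Pt'] Et]].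
  by split; [exists t'|apply: P_ext Pt' _ => i; rewrite Et].
- move=> [[t' [t'S Et]] Pt]; exists t'; split=> //.
  by apply/List.filter_In; split=> //; apply/boolp.asboolP; apply: P_ext Pt Et.
Qed.

Section FiniteOrbit.
Variable L : language.
Variable C : structure L.
Variable E : C -> Prop.
Variable k : nat.
Variable c : 'I_k -> C.

Definition conjugate (t : 'I_k -> C) : Prop :=
  exists s, aut_over E s /\ forall i, t i = s (c i).

Lemma conjugate_ext t t' : conjugate t -> (forall i, t i = t' i) -> conjugate t'.
Proof. by move=> [s [Hs Et]] Et'; exists s; split=> // i; rewrite -Et'. Qed.

Lemma conjugate_aut r t : aut_over E r -> conjugate t -> conjugate (fun i => r (t i)).
Proof.
move=> Hr [s [Hs Et]]; exists (fun x => r (s x)).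
by split=> [|i]; [apply: aut_over_comp|rewrite Et].
Qed.

Lemma acl_conjugates_list (xs : list C) : (forall x, List.In x xs -> acl E x) ->
  exists l : list C, forall s x, aut_over E s -> List.In x xs -> List.In (s x) l.
Proof.
elim: xs => [|x xs IH] xs_acl; first by exists nil.
have [l Hl] := IH (fun y H => xs_acl y (or_intror H)).
have [phi [[Pphi _] [phi_x [l1 Hl1]]]] := xs_acl x (or_introl erefl).
exists (l1 ++ l) => s y Hs [<-|Hy]; apply: List.in_or_app.
- by left; apply: Hl1; apply: sat1_aut Hs Pphi phi_x.
- by right; apply: Hl.
Qed.

Lemma finite_conjugates : inhabited C -> (forall i, acl E (c i)) ->
  exists S : list ('I_k -> C), forall t, mem_tuple t S <-> conjugate t.
Proof.
case=> c0 c_acl.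
have c_list i : List.In (c i) (List.map c (enum 'I_k)).
  by apply: List.in_map; apply: In_of_mem; rewrite mem_enum.
have [l Hl] : exists l : list C, forall s i, aut_over E s -> List.In (s (c i)) l.
  have [|l Hl] := acl_conjugates_list (xs := List.map c (enum 'I_k)).
    by move=> x /List.in_map_iff [i [<- _]].
  by exists l => s i Hs; apply: Hl.
have [T HT] := tuples_of_list l k c0.
exists (List.filter (fun t => boolp.asbool (conjugate t)) T) => t.
rewrite mem_tuple_filter; last exact: conjugate_ext.
split=> [[] //|Ht]; split=> //.
have [s [Hs Et]] := Ht; apply: HT => i; rewrite Et; exact: Hl.
Qed.

End FiniteOrbit.

(** ** Codes of subsets of a finite invariant set are algebraic *)

Section Codes.
Variable L : language.
Variable C : structure L.
Variable kappa : Type.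
Hypothesis HC : monster C kappa.
Variable E : C -> Prop.
Hypothesis E_small : small kappa E.
Variable k : nat.
Variables S S0 : list ('I_k -> C).
Hypothesis S_invariant : forall s t, aut_over E s -> mem_tuple t S ->
  mem_tuple (fun i => s (t i)) S.
Hypothesis S0_S : forall t, List.In t S0 -> mem_tuple t S.

Definition image_list (s : C -> C) : list ('I_k -> C) :=
  List.map (fun t i => s (t i)) S0.

Lemma mem_image_list s u :
  mem_tuple u (image_list s) <-> exists t, List.In t S0 /\ forall i, u i = s (t i).
Proof.
split=> [[u' [/List.in_map_iff [t [<- Ht]] Eu]]|[t [Ht Eu]]]; first by exists t.
by exists (fun i => s (t i)); split=> //; apply: (List.in_map (fun t i => s (t i))).
Qed.

(* For [s] over [E], the set [s S0 ⊆ S] is recorded by which elements of [S]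
   it contains: a word of [length S] bits. *)
Definition trace (s : C -> C) : {ffun 'I_(length S) -> bool} :=
  [ffun i : 'I_(length S) => boolp.asbool
     (exists t, List.nth_error S i = Some t /\ mem_tuple t (image_list s))].

Lemma image_list_trace s1 s : aut_over E s -> trace s1 = trace s ->
  forall u, mem_tuple u (image_list s) -> mem_tuple u (image_list s1).
Proof.
move=> Hs same u /mem_image_list [t [Ht Eu]].
have [t' [t'S Et']] := S_invariant Hs (S0_S Ht).
have [i0 nth_i0] := List.In_nth_error _ _ t'S.
have i0S : i0 < length S by apply/ltP/List.nth_error_Some; rewrite nth_i0.
have : trace s (Ordinal i0S).
  rewrite ffunE; apply/boolp.asboolP; exists t'; split=> //.
  by apply/mem_image_list; exists t; split=> // i; rewrite -Et'.
rewrite -same ffunE => /boolp.asboolP [t1 []]; rewrite nth_i0 => -[<-].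
move=> /mem_image_list [t2 [Ht2 E2]].
by apply/mem_image_list; exists t2; split=> // i; rewrite Eu Et' E2.
Qed.

Lemma same_trace_fixes s1 s s' : aut_over E s1 -> aut_over E s ->
  (forall x, s' (s x) = x) -> (forall x, s (s' x) = x) -> trace s1 = trace s ->
  fixes_setwise (fun x => s' (s1 x)) S0.
Proof.
move=> Hs1 Hs s'K sK same; split.
- move=> t [t2 [Ht2 Et]].
  have : mem_tuple (fun i => s1 (t2 i)) (image_list s1) by apply/mem_image_list; exists t2.
  move/(image_list_trace Hs1 (esym same)) => /mem_image_list [t3 [Ht3 E3]].
  by exists t3; split=> // i; rewrite Et E3 s'K.
- move=> u [u2 [Hu2 Eu]].
  have : mem_tuple (fun i => s (u2 i)) (image_list s) by apply/mem_image_list; exists u2.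
  move/(image_list_trace Hs same) => /mem_image_list [t4 [Ht4 E4]].
  by exists t4; split; [exists t4|move=> i; rewrite -E4 s'K Eu].
Qed.

(* Any code of [S0] consists of elements algebraic over [E]: its
   [Aut(C/E)]-conjugates are determined by the finitely many traces. *)
Lemma code_algebraic m (d : 'I_m -> C) :
  (forall s, automorphism s -> (fixes_setwise s S0 <-> forall j, s (d j) = d j)) ->
  forall j, acl E (d j).
Proof.
move=> d_code j.
have trace_determines s1 s : aut_over E s1 -> aut_over E s -> trace s1 = trace s ->
    s1 (d j) = s (d j).
  move=> Hs1 Hs same; have [s' [Hs' [s'K sK]]] := aut_over_inv Hs.
  have := proj1 (d_code _ (aut_comp (proj1 Hs') (proj1 Hs1)))
                (same_trace_fixes Hs1 Hs s'K sK same) j.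
  by move=> fix_dj; rewrite -{2}fix_dj sK.
pose conj_of_trace tr := match excluded_middle_informative
    (exists s, aut_over E s /\ trace s = tr) with
  | left H => proj1_sig (constructive_indefinite_description _ H) (d j)
  | right _ => d j
  end.
apply: (acl_of_finite_orbit HC E_small
          (O := List.map conj_of_trace (enum {ffun 'I_(length S) -> bool}))) => s Hs.
have -> : s (d j) = conj_of_trace (trace s).
  rewrite /conj_of_trace; case: excluded_middle_informative => [H|[]]; last by exists s.
  by case: constructive_indefinite_description => s1 [Hs1 same] /=; apply: trace_determines.
by apply: List.in_map; apply: In_of_mem; rewrite mem_enum.
Qed.

End Codes.

(** ** Primary extensions give acl-stationary types *)

Section PrimaryStationary.
Variable L : language.
Variable C : structure L.
Variable kappa : Type.
Hypothesis HC : monster C kappa.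
Hypothesis HFS : codes_finite_sets C.
Variable E : C -> Prop.
Hypothesis E_small : small kappa E.
Variable n : nat.
Variable p : fml C -> Prop.
Hypothesis p_type : complete_type n E p.
Variable a : 'I_n -> C.
Hypothesis a_p : realizes a p.
Hypothesis a_primary : primary E (dcl (add_tuple E a)).

Variable q' : fml C -> Prop.
Hypothesis q'_type : complete_type n (acl E) q'.
Hypothesis q'_p : forall phi, p phi -> q' phi.
Variable phi : fml C.
Hypothesis q'_phi : q' phi.

Variable c0 : C.
Let params := fparam_list phi.
Let k := length params.
Let c : 'I_k -> C := fun i => List.nth i params c0.

Lemma c_params i : List.In (c i) params.
Proof. by apply: List.nth_In; apply/ltP; apply: ltn_ord. Qed.

Lemma params_c x : List.In x params -> exists i, c i = x.
Proof. by move=> /(List.In_nth _ _ c0) [j [/ltP jk <-]]; exists (Ordinal jk). Qed.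

Lemma phi_LB : LB_formula n (acl E) phi.
Proof. exact: (proj1 q'_type _ q'_phi). Qed.

Lemma c_acl i : acl E (c i).
Proof. exact: fparam_list_sub (proj1 phi_LB) _ (c_params i). Qed.

(* [phi(a, t)]: [phi] holds of [a] with its parameters [c] replaced by [t] *)
Definition holds_at (t : 'I_k -> C) : Prop :=
  forall s, aut_over E s -> (forall i, s (c i) = t i) ->
  forall v : nat -> C, (forall i : 'I_n, v i = a i) -> sat s v phi.

Lemma holds_at_ext t t' : holds_at t -> (forall i, t i = t' i) -> holds_at t'.
Proof. by move=> H Et s Hs Hst; apply: H => // i; rewrite Hst Et. Qed.

Lemma holds_at_aut r t : aut_over E r -> (forall i, r (a i) = a i) ->
  holds_at t -> holds_at (fun i => r (t i)).
Proof.
move=> Hr ra Ht s Hs Hst v Hv.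
have [r' [Hr' [r'K rK]]] := aut_over_inv Hr.
have r's_c i : r' (s (c i)) = t i by rewrite Hst r'K.
have r'v (i : 'I_n) : r' (v i) = a i by rewrite Hv -{1}(ra i) r'K.
have := Ht _ (aut_over_comp Hr' Hs) r's_c (fun j => r' (v j)) r'v.
rewrite (sat_aut _ phi (proj1 Hr)).
have -> : (fun x => r (r' (s x))) = s by apply: functional_extensionality => x; rewrite rK.
by have -> : (fun j => r (r' (v j))) = v by apply: functional_extensionality => x; rewrite rK.
Qed.

Lemma realization_with_phi : exists a' : 'I_n -> C, realizes a' p /\ sat_tuple a' phi.
Proof.
pose B x := E x \/ List.In x params.
have B_acl x : B x -> acl E x.
  by move=> [Ex|Hx]; [apply: acl_self|apply: fparam_list_sub (proj1 phi_LB) _ Hx].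
pose qB psi := q' psi /\ LB_formula n B psi.
have qB_type : complete_type n B qB.
  split; [by move=> psi []|split].
  - move=> psi Lpsi; case: (proj1 (proj2 q'_type) psi (LB_mono B_acl Lpsi)) => H.
    + by left.
    + by right; split.
  - by move=> l Hl; apply: (proj2 (proj2 q'_type)) => psi /Hl [].
have B_small : small kappa B := small_list params (monster_kappa_uncountable HC) E_small.
have [a' Ha'] := monster_saturated HC B_small qB_type.
exists a'; split.
- move=> psi Hpsi; apply: Ha'; split; first exact: q'_p.
  by apply: LB_mono (proj1 p_type _ Hpsi) => x Ex; left.
- apply: Ha'; split=> //; split; last exact: (proj2 phi_LB).
  by apply: fparams_mono (fparam_list_params phi) => x Hx; right.
Qed.

Lemma holds_at_conjugate a' sigma : sat_tuple a' phi -> aut_over E sigma ->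
  (forall i, sigma (a' i) = a i) -> holds_at (fun i => sigma (c i)).
Proof.
move=> a'_phi Hsigma sigma_a s Hs s_c v Hv.
have [sigma' [_ [sigma'K sigmaK]]] := aut_inv (proj1 Hsigma).
have sigma'v (i : 'I_n) : sigma' (v i) = a' i by rewrite Hv -(sigma_a i) sigma'K.
have := a'_phi (fun j => sigma' (v j)) sigma'v.
rewrite (sat_aut _ phi (proj1 Hsigma)).
have -> : (fun j => sigma (sigma' (v j))) = v.
  by apply: functional_extensionality => x; rewrite sigmaK.
have same_par : fparams (fun x => sigma x = s x) phi.
  by apply: fparams_mono (fparam_list_params phi) => x /params_c [i <-]; rewrite s_c.
exact: (proj1 (sat_coinc same_par (fun _ _ => erefl))).
Qed.

Section Conjugates.
Variable S : list ('I_k -> C).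
Hypothesis S_conj : forall t, mem_tuple t S <-> conjugate E c t.

Let S0 := List.filter (fun t => boolp.asbool (holds_at t)) S.

Lemma mem_S0 t : mem_tuple t S0 <-> conjugate E c t /\ holds_at t.
Proof. by rewrite mem_tuple_filter ?S_conj //; apply: holds_at_ext. Qed.

Lemma S0_closed r t : aut_over E r -> (forall i, r (a i) = a i) ->
  mem_tuple t S0 -> mem_tuple (fun i => r (t i)) S0.
Proof.
move=> Hr ra /mem_S0 [Ct Ht]; apply/mem_S0.
by split; [apply: conjugate_aut|apply: holds_at_aut].
Qed.

Lemma S0_invariant r : aut_over (add_tuple E a) r -> fixes_setwise r S0.
Proof.
move=> [Hr rEa]; have rE : aut_over E r by split=> // x Ex; apply: rEa; left.
have ra i : r (a i) = a i by apply: rEa; right; exists i.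
split=> [t|u Hu]; first exact: S0_closed.
have [r' [Hr' [r'K rK]]] := aut_over_inv rE.
exists (fun i => r' (u i)); split; last by move=> i; rewrite rK.
by apply: S0_closed Hu => // i; rewrite -{1}(ra i) r'K.
Qed.

(* A code of [S0] lies in [dcl(Ea) ∩ acl(E)], hence in [dcl(E)] by primarity. *)
Lemma code_S0_dcl m (d : 'I_m -> C) :
  (forall s, automorphism s -> (fixes_setwise s S0 <-> forall j, s (d j) = d j)) ->
  forall j, dcl E (d j).
Proof.
move=> d_code j.
have d_acl : acl E (d j).
  apply: (code_algebraic HC E_small (S := S)) d_code j => [s t Hs /S_conj Ct|t Ht].
    by apply/S_conj; apply: conjugate_aut.
  by have /mem_S0 [/S_conj] : mem_tuple t S0 by exists t.
apply: (proj1 (proj2 a_primary (d j))); split=> //.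
apply: (dcl_mono (A := add_tuple E a)) => [y Hy|]; first exact: dcl_self.
apply: (dcl_of_fixed HC (small_add_tuple a (monster_kappa_uncountable HC) E_small)).
- by move=> s Hs; apply: (proj1 (d_code s (proj1 Hs))); apply: S0_invariant.
- by apply: acl_mono d_acl => y Ey; left.
Qed.

(* [sigma] maps a realization of [p] satisfying [phi] to [a]; it fixes the code
   of [S0], hence [S0] setwise, and [sigma c ∈ S0] forces [c ∈ S0]. *)
Lemma a_phi_of_conjugates : sat_tuple a phi.
Proof.
have [m [d d_code]] := HFS S0.
have [a' [a'_p a'_phi]] := realization_with_phi.
have [sigma [Hsigma sigma_a]] := realizations_conjugate HC E_small p_type a_p a'_p.
have sigma_S0 : fixes_setwise sigma S0.
  apply/(d_code sigma (proj1 Hsigma)) => j.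
  exact: dcl_fixed Hsigma (code_S0_dcl d_code j).
have sigma_c : mem_tuple (fun i => sigma (c i)) S0.
  apply/mem_S0; split; first by exists sigma.
  exact: holds_at_conjugate a'_phi Hsigma sigma_a.
have [t [/mem_S0 [_ Ht] Et]] := proj2 sigma_S0 _ sigma_c.
have c_holds : holds_at c := holds_at_ext Ht (fun i => aut_inj (proj1 Hsigma) (Et i)).
by move=> v Hv; apply: (c_holds id (conj (@aut_id _ C) (fun x _ => erefl))).
Qed.

End Conjugates.

Lemma extension_realized_by_a : sat_tuple a phi.
Proof.
have [S S_conj] := finite_conjugates (monster_inhabited HC) c_acl.
exact: a_phi_of_conjugates S_conj.
Qed.

End PrimaryStationary.

Lemma primary_stationary L (C : structure L) kappa (HC : monster C kappa)
  (HFS : codes_finite_sets C) (E : C -> Prop) (E_small : small kappa E)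
  n (p : fml C -> Prop) (p_type : complete_type n E p)
  (a : 'I_n -> C) (a_p : realizes a p) (a_primary : primary E (dcl (add_tuple E a))) :
  acl_stationary n E p.
Proof.
case: (monster_inhabited HC) => c0.
exists (tp_acl E a); split; first exact: (tp_acl_complete HC E a).
split; first exact: tp_acl_extends.
move=> q' q'_type q'_p.
have q'_tp phi : q' phi -> tp_acl E a phi.
  move=> q'_phi; split; first exact: (proj1 q'_type _ q'_phi).
  exact (extension_realized_by_a HC HFS E_small p_type a_p a_primary q'_type q'_p q'_phi c0).
move=> phi; split; first exact: q'_tp.
move=> [Lphi a_phi']; case: (proj1 (proj2 q'_type) phi Lphi) => // /q'_tp [_ a_nphi].
by case: (sat_tuple_not (monster_inhabited HC) a_phi' a_nphi).
Qed.

Theorem mainTheorem9 (L : language) (T : formula L Empty_set -> Prop)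
  (C : structure L) (kappa : Type)
  (HT : complete_theory T) (HCT : models C T) (HC : monster C kappa)
  (HFS : codes_finite_sets C)
  (E : C -> Prop) (HE : small kappa E)
  (n : nat) (p : fml C -> Prop) (Hp : complete_type n E p) :
  (acl_stationary n E p <->
     exists a : 'I_n -> C, realizes a p /\ primary E (dcl (add_tuple E a))) /\
  (acl_stationary n E p <->
     forall a : 'I_n -> C, realizes a p -> primary E (dcl (add_tuple E a))).
Proof.
have [a0 a0_p] := monster_saturated HC HE Hp.
split; split.
- by move=> Hst; exists a0; split; last exact: (stationary_primary HC HE Hp Hst a0_p).
- by move=> [a [a_p a_primary]]; exact: (primary_stationary HC HFS HE Hp a_p a_primary).
- by move=> Hst a a_p; exact: (stationary_primary HC HE Hp Hst a_p).
- by move=> all_primary; exact: (primary_stationary HC HFS HE Hp a0_p (all_primary a0 a0_p)).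
Qed.
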